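(* Let $m\ge2$ and $\mathfrak p\ge1$ be integers, and let $\zeta$ act on $2\pi$-periodic paths by $\zeta x(\tau)=x(\tau-2\pi/(m\mathfrak p))$, generating an action of $\mathbb Z_{m\mathfrak p}$. (a) (Comet.) Let $\mathfrak q\ge1$ be an integer, $\omega=\mathfrak p/\mathfrak q$, $\nu=1/\mathfrak q$, $\varepsilon>0$, $x_j(\tau)=e^{-J\omega\tau/\nu}q_j(\tau/\nu)$, and $\mathcal H(x)=\int_0^{2\pi}\sum_{j=1}^n m_j[\phi_\alpha(\|x(\tau)-\varepsilon x_j(\tau)\|)-\phi_\alpha(\|x(\tau)\|)]d\tau$. If there is a permutation $\sigma$ of $\{1,\dots,n\}$ with $m_j=m_{\sigma(j)}$ and $q_j(t+2\pi\mathfrak q/(m\mathfrak p))=e^{2\pi J/m}q_{\sigma(j)}(t)$ for all $t$ and $j=1,\dots,n$, then $\mathcal H(\zeta x)=\mathcal H(x)$ for all $x$. (b) (Moon.) Let $m_1=1$, $q_j(t)=e^{tJ}a_j$ with $a_j=\sum_{k\ne j}m_k\frac{a_j-a_k}{\|a_j-a_k\|^{\alpha+1}}$, let $\omega>1$, $\nu=(\omega-1)/\mathfrak p$, $\varepsilon>0$, $x_j(\tau)=e^{-J\omega\tau/\nu}q_j(\tau/\nu)$, $y_j=x_1-x_j$, and $\mathcal H(x)=\int_0^{2\pi}h(x(\tau),\tau)d\tau$ with $h(x,\tau)=\varepsilon^{\alpha-1}\sum_{j=2}^n m_j[\phi_\alpha(\|y_j(\tau)+\varepsilon x\|)+\frac{y_j(\tau)}{\|y_j(\tau)\|^{\alpha+1}}\cdot\varepsilon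 x]$ for $\alpha>1$ and $h(x,\tau)=\sum_{j=2}^n m_j[-\log\frac{\|y_j(\tau)+\varepsilon x\|}{\|y_j(\tau)\|}+\frac{y_j(\tau)}{\|y_j(\tau)\|^2}\cdot\varepsilon x]$ for $\alpha=1$. If there is a permutation $\sigma$ of $\{1,\dots,n\}$ with $\sigma(1)=1$, $a_1=0$, and $m_j=m_{\sigma(j)}$, $a_j=e^{2\pi J/m}a_{\sigma(j)}$ for $j=2,\dots,n$, then $\mathcal H(\zeta x)=\mathcal H(x)$ for all $x$.
   Context: $n\ge2$, $\alpha\ge1$, masses $m_1,\dots,m_n>0$. In (a), $q_1,\dots,q_n$ is a collision-free $2\pi$-periodic solution of the $n$-body problem $\ddot q_j=-\sum_{k\ne j}m_k\frac{q_j-q_k}{\|q_j-q_k\|^{\alpha+1}}$ with $\sum_jm_jq_j=0$ and $\sum_jm_j=1$. $\phi_\alpha(\lambda)=\frac1{\alpha-1}\lambda^{1-\alpha}$ for $\alpha>1$, $\phi_1(\lambda)=-\log\lambda$. $J=\begin{pmatrix}0&1\\-1&0\end{pmatrix}$, $e^{J\theta}=\cos\theta\,I+\sin\theta\,J$. The paths $x$ range over $2\pi$-periodic $H^1$ paths for which the integrands are defined (no collisions). *)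

From Stdlib Require Import Reals Lra List.
From Coquelicot Require Import Coquelicot.
Open Scope R_scope.

Definition vec := (R * R)%type.
Definition v0 : vec := (0, 0).
Definition vadd (u v : vec) : vec := (fst u + fst v, snd u + snd v).
Definition vsub (u v : vec) : vec := (fst u - fst v, snd u - snd v).
Definition vscale (c : R) (u : vec) : vec := (c * fst u, c * snd u).
Definition vdot (u v : vec) : R := fst u * fst v + snd u * snd v.
Definition vnorm (u : vec) : R := sqrt (vdot u u).

(* e^{J theta} u, with J = [[0,1],[-1,0]] and e^{J theta} = cos theta I + sin theta J *)
Definition rotJ (theta : R) (u : vec) : vec :=
  (cos theta * fst u + sin theta * snd u, - sin theta * fst u + cos theta * snd u).

(* finite sums over indices a, a+1, ..., n-1 ; bodies 1..n are indices 0..n-1 *)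
Definition sumR_from (a n : nat) (f : nat -> R) : R :=
  fold_right Rplus 0 (map f (seq a (n - a))).
Definition sumR (n : nat) (f : nat -> R) : R := sumR_from 0 n f.
Definition vsumR (n : nat) (f : nat -> vec) : vec :=
  fold_right vadd v0 (map f (seq 0 n)).

Definition is_perm (n : nat) (sigma : nat -> nat) : Prop :=
  (forall j, (j < n)%nat -> (sigma j < n)%nat) /\
  (forall i j, (i < n)%nat -> (j < n)%nat -> sigma i = sigma j -> i = j).

Definition phi (alpha lam : R) : R :=
  if Req_EM_T alpha 1 then - ln lam else Rpower lam (1 - alpha) / (alpha - 1).

Definition force (n : nat) (alpha : R) (mass : nat -> R) (u : nat -> vec) (j : nat) : vec :=
  vsumR n (fun k => if Nat.eq_dec k j then v0 else
    vscale (mass k / Rpower (vnorm (vsub (u j) (u k))) (alpha + 1)) (vsub (u j) (u k))).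

Definition is_nbody_periodic_solution (n : nat) (alpha : R) (mass : nat -> R)
    (q : nat -> R -> vec) : Prop :=
  (exists q' q'' : nat -> R -> vec, forall j t, (j < n)%nat ->
     is_derive (fun s => fst (q j s)) t (fst (q' j t)) /\
     is_derive (fun s => snd (q j s)) t (snd (q' j t)) /\
     is_derive (fun s => fst (q' j s)) t (fst (q'' j t)) /\
     is_derive (fun s => snd (q' j s)) t (snd (q'' j t)) /\
     q'' j t = vscale (-1) (force n alpha mass (fun k => q k t) j)) /\
  (forall j t, (j < n)%nat -> q j (t + 2 * PI) = q j t) /\
  (forall j k t, (j < n)%nat -> (k < n)%nat -> j <> k -> q j t <> q k t).

Definition cont_periodic_path (x : R -> vec) : Prop :=
  (forall t, continuous (fun s => fst (x s)) t /\ continuous (fun s => snd (x s)) t) /\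
  (forall t, x (t + 2 * PI) = x t).

Definition zeta (m p : nat) (x : R -> vec) : R -> vec :=
  fun tau => x (tau - 2 * PI / (INR m * INR p)).

Definition rot_frame (omega nu : R) (q : nat -> R -> vec) (j : nat) (tau : R) : vec :=
  rotJ (- (omega * tau / nu)) (q j (tau / nu)).

Definition H_comet (n : nat) (alpha : R) (mass : nat -> R) (eps : R)
    (xs : nat -> R -> vec) (x : R -> vec) : R :=
  RInt (fun tau => sumR n (fun j =>
          mass j * (phi alpha (vnorm (vsub (x tau) (vscale eps (xs j tau))))
                    - phi alpha (vnorm (x tau))))) 0 (2 * PI).

(* Moon integrand h(x,tau), y_j = x_1 - x_j, sum over j = 2..n (indices 1..n-1) *)
Definition h_moon (n : nat) (alpha : R) (mass : nat -> R) (eps : R)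
    (xs : nat -> R -> vec) (x : vec) (tau : R) : R :=
  let y j := vsub (xs 0%nat tau) (xs j tau) in
  if Req_EM_T alpha 1 then
    sumR_from 1 n (fun j => mass j *
      (- ln (vnorm (vadd (y j) (vscale eps x)) / vnorm (y j))
       + vdot (vscale (/ (vnorm (y j) ^ 2)) (y j)) (vscale eps x)))
  else
    Rpower eps (alpha - 1) * sumR_from 1 n (fun j => mass j *
      (phi alpha (vnorm (vadd (y j) (vscale eps x)))
       + vdot (vscale (/ Rpower (vnorm (y j)) (alpha + 1)) (y j)) (vscale eps x))).

Definition H_moon (n : nat) (alpha : R) (mass : nat -> R) (eps : R)
    (xs : nat -> R -> vec) (x : R -> vec) : R :=
  RInt (fun tau => h_moon n alpha mass eps xs (x tau) tau) 0 (2 * PI).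

(** Both functionals have the form [H x = ∫_0^{2π} L (x τ) τ dτ], where [L y τ] depends on
    [τ] only through the masses and positions [xs_j τ] of the rotating-frame bodies, entering
    as a sum over [j].  The symmetry hypothesis says that shifting time by [c = 2π/(m p)]
    permutes the bodies, [xs_j τ = xs_{σ j} (τ - c)], while [σ] preserves the masses; hence
    [L y τ = L y (τ - c)].  Since [L] and [x] are [2π]-periodic, substituting [τ ↦ τ + c] in
    [H (ζ x) = ∫ L (x (τ - c)) τ dτ] gives back [H x]. *)
From Stdlib Require Import Reals Lra Lia List Permutation.
From Stdlib Require Import FunctionalExtensionality PropExtensionality.
From Coquelicot Require Import Coquelicot.
Open Scope R_scope.

Lemma fold_right_Rplus_Permutation (l l' : list R) :
  Permutation l l' -> fold_right Rplus 0 l = fold_right Rplus 0 l'.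
Proof. induction 1; simpl; try congruence; ring. Qed.

Lemma sumR_from_reindex (a n : nat) (F F' : nat -> R) (s : nat -> nat) :
  (forall j, (a <= j < n)%nat -> (a <= s j < n)%nat) ->
  (forall i j, (a <= i < n)%nat -> (a <= j < n)%nat -> s i = s j -> i = j) ->
  (forall j, (a <= j < n)%nat -> F j = F' (s j)) ->
  sumR_from a n F = sumR_from a n F'.
Proof.
  intros Hrange Hinj HF; unfold sumR_from.
  rewrite (map_ext_in F (fun j => F' (s j))) by (intros j Hj; apply in_seq in Hj; apply HF; lia).
  rewrite <- (map_map s F').
  apply fold_right_Rplus_Permutation, Permutation_map, NoDup_Permutation_bis.
  - apply NoDup_map_NoDup_ForallPairs; [|apply seq_NoDup].
    intros i j Hi Hj; apply in_seq in Hi, Hj; apply Hinj; lia.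
  - rewrite length_map; lia.
  - intros y Hy; apply in_map_iff in Hy as [j [<- Hj]].
    apply in_seq in Hj; apply in_seq; specialize (Hrange j); lia.
Qed.

Lemma is_perm_restrict_pos (n : nat) (sigma : nat -> nat) :
  is_perm n sigma -> sigma 0%nat = 0%nat ->
  (forall j, (1 <= j < n)%nat -> (1 <= sigma j < n)%nat) /\
  (forall i j, (1 <= i < n)%nat -> (1 <= j < n)%nat -> sigma i = sigma j -> i = j).
Proof.
  intros [Hrange Hinj] Hfix; split.
  - intros j Hj; split; [|apply Hrange; lia].
    destruct (sigma j) eqn:E; [|lia].
    enough (j = 0%nat) by lia.
    apply Hinj; [lia|lia|congruence].
  - intros i j Hi Hj; apply Hinj; lia.
Qed.

Lemma periodic_INR {A : Type} (f : R -> A) (T t : R) (k : nat) :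
  (forall s, f (s + T) = f s) -> f (t + T * INR k) = f t.
Proof.
  intros Hper; induction k as [|k IH].
  - simpl; f_equal; ring.
  - rewrite S_INR; replace (t + T * (INR k + 1)) with (t + T * INR k + T) by ring.
    now rewrite Hper.
Qed.

Lemma rotJ_add (a b : R) (v : vec) : rotJ a (rotJ b v) = rotJ (a + b) v.
Proof. destruct v; unfold rotJ; simpl; rewrite cos_plus, sin_plus; f_equal; ring. Qed.

Lemma rotJ_period (th : R) (k : nat) (v : vec) : rotJ (th - 2 * INR k * PI) v = rotJ th v.
Proof.
  unfold rotJ; rewrite <- (cos_period _ k), <- (sin_period _ k).
  now replace (th - 2 * INR k * PI + 2 * INR k * PI) with th by ring.
Qed.

Lemma rotJ_v0 (th : R) : rotJ th v0 = v0.
Proof. unfold rotJ, v0; simpl; f_equal; ring. Qed.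

Lemma is_RInt_translate (F : R -> R) (a b d l : R) :
  is_RInt F (a + d) (b + d) l -> is_RInt (fun t => F (t + d)) a b l.
Proof.
  intros HI.
  replace (a + d) with (1 * a + d) in HI by ring.
  replace (b + d) with (1 * b + d) in HI by ring.
  apply is_RInt_comp_lin in HI.
  apply is_RInt_ext with (2 := HI); intros t _.
  change (1 * F (1 * t + d) = F (t + d)); now rewrite !Rmult_1_l.
Qed.

Lemma is_RInt_shift_periodic (F : R -> R) (T d l : R) :
  0 <= d <= T -> (forall s, F (s + T) = F s) ->
  is_RInt F 0 T l -> is_RInt (fun t => F (t - d)) 0 T l.
Proof.
  intros Hd Hper HI.
  assert (Hex : ex_RInt F 0 T) by (exists l; exact HI).
  assert (Hex1 : ex_RInt F 0 (T - d)) by (apply (@ex_RInt_Chasles_1 R_CompleteNormedModule _ _ _ T); [lra|exact Hex]).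
  assert (Hex2 : ex_RInt F (T - d) T) by (apply (@ex_RInt_Chasles_2 R_CompleteNormedModule _ 0); [lra|exact Hex]).
  replace l with (plus (RInt F (T - d) T) (RInt F 0 (T - d))).
  2:{ rewrite plus_comm, (@RInt_Chasles R_CompleteNormedModule) by assumption.
    now apply (@is_RInt_unique R_CompleteNormedModule). }
  assert (Hhead : is_RInt (fun t => F (t - d)) 0 d (RInt F (T - d) T)).
  { apply is_RInt_ext with (fun t => F (t + (T - d))).
    { intros t _; rewrite <- (Hper (t - d)); f_equal; ring. }
    apply is_RInt_translate; replace (0 + (T - d)) with (T - d) by ring;
      replace (d + (T - d)) with T by ring; now apply (@RInt_correct R_CompleteNormedModule). }
  assert (Htail : is_RInt (fun t => F (t - d)) d T (RInt F 0 (T - d))).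
  { apply is_RInt_translate; replace (d + - d) with 0 by ring;
      replace (T + - d) with (T - d) by ring; now apply (@RInt_correct R_CompleteNormedModule). }
  exact (is_RInt_Chasles _ _ _ _ _ _ Hhead Htail).
Qed.

(* [F] need not be integrable: [RInt] is defined by [iota] on [is_RInt], so we show that
   the two [is_RInt] predicates coincide. *)
Lemma RInt_shift_periodic (F : R -> R) (T c : R) :
  0 <= c <= T -> (forall s, F (s + T) = F s) ->
  RInt (fun t => F (t - c)) 0 T = RInt F 0 T.
Proof.
  intros Hc Hper; unfold RInt; f_equal.
  apply functional_extensionality; intro l; apply propositional_extensionality; split.
  - intros HI; apply is_RInt_shift_periodic with (d := T - c) in HI; [| lra |].
    + apply is_RInt_ext with (2 := HI); intros t _; cbv beta.
      rewrite <- (Hper (t - (T - c) - c)); f_equal; ring.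
    + intro s; rewrite <- (Hper (s - c)); f_equal; ring.
  - now apply is_RInt_shift_periodic.
Qed.

Lemma RInt_time_shift_invariant (L : vec -> R -> R) (x : R -> vec) (T c : R) :
  0 <= c <= T ->
  (forall t, x (t + T) = x t) ->
  (forall y t, L y (t + T) = L y t) ->
  (forall y t, L y t = L y (t - c)) ->
  RInt (fun t => L (x (t - c)) t) 0 T = RInt (fun t => L (x t) t) 0 T.
Proof.
  intros Hc Hx Hper Hshift.
  rewrite <- (RInt_shift_periodic (fun t => L (x t) t) T c Hc).
  - apply RInt_ext; intros t _; apply Hshift.
  - intro s; now rewrite Hx, Hper.
Qed.

Lemma zeta_shift_bounds (m p : nat) :
  (1 <= m)%nat -> (1 <= p)%nat -> 0 <= 2 * PI / (INR m * INR p) <= 2 * PI.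
Proof.
  intros Hm Hp.
  assert (Hmp : 1 <= INR m * INR p).
  { rewrite <- mult_INR; apply (le_INR 1); lia. }
  pose proof PI_RGT_0.
  split.
  - apply Rlt_le, Rdiv_lt_0_compat; lra.
  - apply Rmult_le_reg_r with (INR m * INR p); [lra|].
    unfold Rdiv; rewrite Rmult_assoc, Rinv_l by lra; nra.
Qed.

Definition comet_density (n : nat) (alpha : R) (mass : nat -> R) (eps : R)
    (xs : nat -> R -> vec) (y : vec) (tau : R) : R :=
  sumR n (fun j => mass j * (phi alpha (vnorm (vsub y (vscale eps (xs j tau))))
                             - phi alpha (vnorm y))).

Lemma comet_density_reindex n alpha mass eps (xs : nat -> R -> vec) (s : nat -> nat) y t1 t2 :
  is_perm n s -> (forall j, (j < n)%nat -> mass j = mass (s j)) ->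
  (forall j, (j < n)%nat -> xs j t1 = xs (s j) t2) ->
  comet_density n alpha mass eps xs y t1 = comet_density n alpha mass eps xs y t2.
Proof.
  intros [Hrange Hinj] Hmass Hxs; unfold comet_density, sumR.
  apply sumR_from_reindex with s.
  - intros j Hj; specialize (Hrange j); lia.
  - intros i j Hi Hj; apply Hinj; lia.
  - intros j Hj; now rewrite Hmass, Hxs by lia.
Qed.

Lemma h_moon_reindex n alpha mass eps (xs : nat -> R -> vec) (s : nat -> nat) y t1 t2 :
  (forall j, (1 <= j < n)%nat -> (1 <= s j < n)%nat) ->
  (forall i j, (1 <= i < n)%nat -> (1 <= j < n)%nat -> s i = s j -> i = j) ->
  (forall j, (1 <= j < n)%nat -> mass j = mass (s j)) ->
  xs 0%nat t1 = xs 0%nat t2 ->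
  (forall j, (1 <= j < n)%nat -> xs j t1 = xs (s j) t2) ->
  h_moon n alpha mass eps xs y t1 = h_moon n alpha mass eps xs y t2.
Proof.
  intros Hrange Hinj Hmass H0 Hxs; unfold h_moon; cbv zeta.
  destruct (Req_EM_T alpha 1); [|f_equal];
    apply sumR_from_reindex with s; auto;
    intros j Hj; now rewrite (Hmass j Hj), (Hxs j Hj), H0.
Qed.

Lemma rot_frame_comet (p qq : nat) (q : nat -> R -> vec) (j : nat) (tau : R) :
  (1 <= qq)%nat ->
  rot_frame (INR p / INR qq) (1 / INR qq) q j tau = rotJ (- INR p * tau) (q j (INR qq * tau)).
Proof.
  intros Hqq; assert (0 < INR qq) by (apply lt_0_INR; lia).
  unfold rot_frame; f_equal; [|f_equal]; field; lra.
Qed.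

Lemma rot_frame_moon (omega : R) (p : nat) (a : nat -> vec) (j : nat) (tau : R) :
  1 < omega -> (1 <= p)%nat ->
  rot_frame omega ((omega - 1) / INR p) (fun j t => rotJ t (a j)) j tau
  = rotJ (- INR p * tau) (a j).
Proof.
  intros Homega Hp; assert (0 < INR p) by (apply lt_0_INR; lia).
  unfold rot_frame; rewrite rotJ_add; f_equal; field; lra.
Qed.

Lemma rotJ_shift_zeta (m p : nat) (tau : R) (v : vec) :
  (1 <= m)%nat -> (1 <= p)%nat ->
  rotJ (- INR p * tau) (rotJ (2 * PI / INR m) v)
  = rotJ (- INR p * (tau - 2 * PI / (INR m * INR p))) v.
Proof.
  intros Hm Hp.
  assert (0 < INR m) by (apply lt_0_INR; lia); assert (0 < INR p) by (apply lt_0_INR; lia).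
  rewrite rotJ_add; f_equal; field; lra.
Qed.

Lemma rotJ_periodic_time (p : nat) (tau : R) (v : vec) :
  rotJ (- INR p * (tau + 2 * PI)) v = rotJ (- INR p * tau) v.
Proof.
  rewrite <- (rotJ_period (- INR p * tau) p); f_equal; ring.
Qed.

Theorem lemma2 (n : nat) (alpha : R) (mass : nat -> R) (m p : nat)
  (Hn : (2 <= n)%nat) (Halpha : 1 <= alpha)
  (Hmass : forall j, (j < n)%nat -> 0 < mass j)
  (Hm : (2 <= m)%nat) (Hp : (1 <= p)%nat) :
  (* (a) Comet *)
  (forall (q : nat -> R -> vec) (qq : nat) (eps : R) (sigma : nat -> nat),
     is_nbody_periodic_solution n alpha mass q ->
     (forall t, vsumR n (fun j => vscale (mass j) (q j t)) = v0) ->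
     sumR n mass = 1 ->
     (1 <= qq)%nat -> 0 < eps ->
     is_perm n sigma ->
     (forall j, (j < n)%nat -> mass j = mass (sigma j)) ->
     (forall j t, (j < n)%nat ->
        q j (t + 2 * PI * INR qq / (INR m * INR p)) = rotJ (2 * PI / INR m) (q (sigma j) t)) ->
     let omega := INR p / INR qq in
     let nu := 1 / INR qq in
     let xs := rot_frame omega nu q in
     forall x : R -> vec,
       cont_periodic_path x ->
       (forall tau, x tau <> v0) ->
       (forall j tau, (j < n)%nat -> x tau <> vscale eps (xs j tau)) ->
       H_comet n alpha mass eps xs (zeta m p x) = H_comet n alpha mass eps xs x)
  /\
  (* (b) Moon *)
  (forall (a : nat -> vec) (omega eps : R) (sigma : nat -> nat),
     mass 0%nat = 1 ->
     (forall j k, (j < n)%nat -> (k < n)%nat -> j <> k -> a j <> a k) ->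
     (forall j, (j < n)%nat -> a j = force n alpha mass a j) ->
     1 < omega -> 0 < eps ->
     is_perm n sigma -> sigma 0%nat = 0%nat -> a 0%nat = v0 ->
     (forall j, (1 <= j < n)%nat -> mass j = mass (sigma j)) ->
     (forall j, (1 <= j < n)%nat -> a j = rotJ (2 * PI / INR m) (a (sigma j))) ->
     let q := fun j t => rotJ t (a j) in
     let nu := (omega - 1) / INR p in
     let xs := rot_frame omega nu q in
     forall x : R -> vec,
       cont_periodic_path x ->
       (forall j tau, (1 <= j < n)%nat ->
          vadd (vsub (xs 0%nat tau) (xs j tau)) (vscale eps (x tau)) <> v0) ->
       H_moon n alpha mass eps xs (zeta m p x) = H_moon n alpha mass eps xs x).
Proof.
  pose proof (zeta_shift_bounds m p ltac:(lia) Hp) as Hc.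
  split.
  - intros q qq eps sigma [_ [Hqper _]] _ _ Hqq _ Hperm Hmass_sigma Hsym omega nu xs
      x [_ Hxper] _ _.
    assert (Hxs : forall j tau, xs j tau = rotJ (- INR p * tau) (q j (INR qq * tau)))
      by (intros; now apply rot_frame_comet).
    apply (RInt_time_shift_invariant (comet_density n alpha mass eps xs)); [exact Hc|exact Hxper| |].
    + intros y t; apply comet_density_reindex with (fun j => j); [split; auto|auto|].
      intros j Hj; rewrite !Hxs, rotJ_periodic_time.
      replace (INR qq * (t + 2 * PI)) with (INR qq * t + 2 * PI * INR qq) by ring.
      now rewrite (periodic_INR (q j)) by auto.
    + intros y t; apply comet_density_reindex with sigma; auto.
      intros j Hj; rewrite !Hxs, <- rotJ_shift_zeta, <- Hsym by lia.
      assert (0 < INR m) by (apply lt_0_INR; lia); assert (0 < INR p) by (apply lt_0_INR; lia).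
      do 2 f_equal; field; lra.
  - intros a omega eps sigma _ _ _ Homega _ Hperm Hfix Ha0 Hmass_sigma Hsym q nu xs x [_ Hxper] _.
    destruct (is_perm_restrict_pos n sigma Hperm Hfix) as [Hrange Hinj].
    assert (Hxs : forall j tau, xs j tau = rotJ (- INR p * tau) (a j))
      by (intros; now apply rot_frame_moon).
    apply (RInt_time_shift_invariant (h_moon n alpha mass eps xs)); [exact Hc|exact Hxper| |].
    + intros y t; apply h_moon_reindex with (fun j => j); auto.
      * now rewrite !Hxs, rotJ_periodic_time.
      * intros j _; now rewrite !Hxs, rotJ_periodic_time.
    + intros y t; apply h_moon_reindex with sigma; auto.
      * now rewrite !Hxs, Ha0, !rotJ_v0.
      * intros j Hj; now rewrite !Hxs, (Hsym j Hj), rotJ_shift_zeta by lia.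
Qed.
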